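(* Let $R$ be a ring with Jacobson radical $J$, and let $M$ be an RD-regular left $R$-module. Then $JM=0$; and if moreover $R$ is semilocal, then $M$ is semisimple.
   Context: A short exact sequence of left $R$-modules is RD-pure if it remains exact after tensoring with every right module of the form $R/rR$, $r\in R$; a submodule is an RD-submodule if the inclusion gives an RD-pure exact sequence. A left module is RD-regular if all of its submodules are RD-submodules. *)

From mathcomp Require Import all_boot all_order all_algebra.
Set Implicit Arguments. Unset Strict Implicit. Unset Printing Implicit Defensive.
Import GRing.Theory.
Local Open Scope ring_scope.

Definition submod (R : nzRingType) (M : lmodType R) (N : M -> Prop) : Prop :=
  [/\ N 0, (forall x y, N x -> N y -> N (x + y)) &
      (forall (r : R) x, N x -> N (r *: x))].

Definition left_ideal (R : nzRingType) (I : R -> Prop) : Prop :=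
  [/\ I 0, (forall x y, I x -> I y -> I (x + y)) &
      (forall r x, I x -> I (r * x))].

Definition maximal_left_ideal (R : nzRingType) (I : R -> Prop) : Prop :=
  [/\ left_ideal I, ~ I 1 &
      forall K : R -> Prop, left_ideal K -> (forall x, I x -> K x) ->
        (forall x, K x <-> I x) \/ K 1].

Definition jacobson (R : nzRingType) (a : R) : Prop :=
  forall I : R -> Prop, maximal_left_ideal I -> I a.

(* N is an RD-submodule of M: the sequence 0 -> N -> M -> M/N -> 0 stays exact
   after tensoring with R/rR for every r.  Using (R/rR) (x) X = X/rX and right
   exactness of the tensor product, this says exactly that the induced map
   N/rN -> M/rM is injective, i.e. N \cap rM \subseteq rN. *)
Definition RD_submod (R : nzRingType) (M : lmodType R) (N : M -> Prop) : Prop :=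
  forall (r : R) (x : M), N x -> (exists m : M, x = r *: m) ->
    exists n : M, N n /\ x = r *: n.

Definition RD_regular (R : nzRingType) (M : lmodType R) : Prop :=
  forall N : M -> Prop, submod N -> RD_submod N.

Definition semisimple_mod (R : nzRingType) (M : lmodType R) : Prop :=
  forall N : M -> Prop, submod N ->
    exists K : M -> Prop, [/\ submod K,
      (forall x, N x -> K x -> x = 0) &
      (forall m, exists n k, [/\ N n, K k & m = n + k])].

(* R is semilocal: R/J is semisimple (as a left R/J-module, equivalently as a
   left R-module).  Submodules of R/J correspond to left ideals I of R with
   J \subseteq I; a complement of I/J is K/J with I + K = R and I \cap K = J. *)
Definition semilocal (R : nzRingType) : Prop :=
  forall I : R -> Prop, left_ideal I -> (forall a, jacobson a -> I a) ->
    exists K : R -> Prop, [/\ left_ideal K, (forall a, jacobson a -> K a),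
      (forall x, I x -> K x -> jacobson x) &
      (forall x, exists i k, [/\ I i, K k & x = i + k])].

From mathcomp Require Import all_boot all_order all_algebra.
From mathcomp Require Import boolp classical_sets.
Set Implicit Arguments. Unset Strict Implicit. Unset Printing Implicit Defensive.
Import GRing.Theory.
Local Open Scope classical_set_scope.
Local Open Scope ring_scope.

(* Part one: in an RD-regular module the cyclic submodule R(am) is RD-pure, so
   am = a(tam) for some t, i.e. (1 - at)am = 0; for a in J the element 1 - at
   is left invertible, whence am = 0.
   Part two: let K be maximal among the submodules meeting a given submodule N
   trivially (Zorn).  For m in M the left ideal L = {r | rm in N + K} contains
   J, so semilocality gives a left ideal C with L + C = R and L n C in J.  For
   c in C, adjoining cm to K keeps it disjoint from N, since r c in L n C
   forces r c m = 0; by maximality cm in K.  Writing 1 = l + c then puts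
   m = lm + cm in N + K. *)

Lemma Zorn_bigcup_above (T : Type) (P : set (set T)) (X0 : set T) :
  P X0 ->
  (forall F : set (set T), F `<=` P -> F !=set0 -> total_on F subset ->
    P (\bigcup_(X in F) X)) ->
  exists A, [/\ P A, X0 `<=` A & forall B, P B -> A `<=` B -> B `<=` A].
Proof.
move=> PX0 Pchain.
pose P' := [set X | P (X0 `|` X)].
have [|A [P'A Amax]] := @Zorn_bigcup T P'.
  move=> F FP' Ftot; rewrite /P' /=.
  have [->|F0] := eqVneq F set0; first by rewrite bigcup_set0 setU0.
  rewrite -bigcupUr; last exact/set0P.
  rewrite -(bigcup_image F (setU X0) id); apply: Pchain.
  - by move=> _ [X FX <-]; exact: FP'.
  - by have [X FX] := (set0P F).1 F0; exists (X0 `|` X), X.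
  - move=> _ _ [X FX <-] [Y FY <-].
    by have [XY|YX] := Ftot X Y FX FY; [left|right]; apply: setUS.
exists (X0 `|` A); split; [exact: P'A | exact: subsetUl |].
move=> B PB AB; have X0B : X0 `<=` B by apply: subset_trans AB; exact: subsetUl.
have P'B : P' B by rewrite /P' /= setUidr.
have [BA|nBA] := pselect (B `<=` A).
  by apply: subset_trans BA _; exact: subsetUr.
by exfalso; apply: (Amax B) => //; split => //; apply: subset_trans AB; exact: subsetUr.
Qed.

Lemma submod_bigcup (R : nzRingType) (M : lmodType R) (F : set (set M)) :
  F `<=` @submod R M -> F !=set0 -> total_on F subset ->
  submod (\bigcup_(X in F) X).
Proof.
move=> Fsub [X0 FX0] Ftot; split.
- by exists X0 => //; have [] := Fsub X0 FX0.
- move=> x y [X FX Xx] [Y FY Yy].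
  have [XY|YX] := Ftot X Y FX FY.
  + by exists Y => //; have [_ DY _] := Fsub Y FY; exact: DY (XY x Xx) Yy.
  + by exists X => //; have [_ DX _] := Fsub X FX; exact: DX Xx (YX y Yy).
- by move=> r x [X FX Xx]; exists X => //; have [_ _ ZX] := Fsub X FX; exact: ZX.
Qed.

Lemma ex_maximal_left_ideal (R : nzRingType) (L : set R) :
  left_ideal L -> ~ L 1 -> exists I, maximal_left_ideal I /\ L `<=` I.
Proof.
move=> idL L1.
have [|I [[idI I1] LI Imax]] :=
    @Zorn_bigcup_above R [set I | left_ideal I /\ ~ I 1] L (conj idL L1).
  move=> F Fsub F0 Ftot; split.
    (* left ideals of R are the submodules of R^o *)
    by apply: (@submod_bigcup R R^o) => // I /Fsub[].
  by case=> I FI; have [_] := Fsub I FI.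
exists I; split => //; split => // K idK IK.
have [K1|K1] := pselect (K 1); [by right | left => x; split; last exact: IK].
exact: Imax.
Qed.

Lemma jacobson_linv (R : nzRingType) (a y : R) :
  jacobson a -> exists u, u * (1 - y * a) = 1.
Proof.
move=> Ja; pose L : set R := [set x | exists u, x = u * (1 - y * a)].
have idL : left_ideal L.
  split.
  - by exists 0; rewrite mul0r.
  - by move=> _ _ [u ->] [v ->]; exists (u + v); rewrite mulrDl.
  - by move=> r _ [u ->]; exists (r * u); rewrite mulrA.
have [[u /esym]|L1] := pselect (L 1); first by exists u.
have [I [Imax LI]] := ex_maximal_left_ideal idL L1.
have [[_ DI ZI] I1 _] := Imax.
have Iya : I (y * a) by apply: ZI; exact: Ja.
by case: I1; rewrite -(subrK (y * a) 1); apply: DI Iya; apply: LI; exists 1; rewrite mul1r.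
Qed.

Lemma linv_subr_mulC (R : nzRingType) (a t u : R) :
  u * (1 - t * a) = 1 -> (1 + a * u * t) * (1 - a * t) = 1.
Proof.
move=> ulinv.
have uta : u * t * a = u - 1.
  by rewrite -[X in u - X]ulinv mulrBr mulr1 mulrA opprB addrC subrK.
rewrite mulrBr mulr1 mulrDl mul1r.
have -> : a * u * t * (a * t) = a * (u * t * a) * t by rewrite !mulrA.
by rewrite uta mulrBr mulr1 mulrBl -mulrA [a * t + _]addrC subrK addrK.
Qed.

Lemma jacobson_rlinv (R : nzRingType) (a t : R) :
  jacobson a -> exists w, w * (1 - a * t) = 1.
Proof.
by move=> /(jacobson_linv t)[u /linv_subr_mulC ?]; exists (1 + a * u * t).
Qed.

Lemma RD_regular_scale_regular (R : nzRingType) (M : lmodType R) :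
  RD_regular M -> forall (a : R) (m : M), exists t, a *: m = (a * t * a) *: m.
Proof.
move=> RDM a m; pose N : set M := [set x | exists t, x = t *: (a *: m)].
have subN : submod N.
  split.
  - by exists 0; rewrite scale0r.
  - by move=> _ _ [u ->] [v ->]; exists (u + v); rewrite scalerDl.
  - by move=> r _ [u ->]; exists (r * u); rewrite scalerA.
have [_ [[t ->] amE]] := RDM N subN a (a *: m) (ex_intro _ 1 (esym (scale1r _)))
  (ex_intro _ m erefl).
by exists t; rewrite amE !scalerA.
Qed.

Lemma RD_regular_jacobson_scale0 (R : nzRingType) (M : lmodType R) :
  RD_regular M -> forall (a : R) (m : M), jacobson a -> a *: m = 0.
Proof.
move=> RDM a m Ja; have [t amE] := RD_regular_scale_regular RDM a m.
have [w wlinv] := jacobson_rlinv t Ja.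
have annih_am : (1 - a * t) *: (a *: m) = 0.
  by rewrite scalerBl scale1r scalerA -amE subrr.
by rewrite -[a *: m]scale1r -wlinv -scalerA annih_am scaler0.
Qed.

Definition adjoin (R : nzRingType) (M : lmodType R) (K : set M) (v : M) : set M :=
  [set x | exists k (r : R), K k /\ x = k + r *: v].

Lemma submod_adjoin (R : nzRingType) (M : lmodType R) (K : set M) (v : M) :
  submod K -> submod (adjoin K v).
Proof.
case=> K0 DK ZK; split.
- by exists 0, 0; rewrite scale0r addr0.
- move=> _ _ [k [r [Kk ->]]] [k' [r' [Kk' ->]]].
  by exists (k + k'), (r + r'); rewrite scalerDl addrACA; split => //; apply: DK.
- move=> s _ [k [r [Kk ->]]].
  by exists (s *: k), (s * r); rewrite scalerDr scalerA; split => //; apply: ZK.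
Qed.

Lemma submod0 (R : nzRingType) (M : lmodType R) : submod [set 0 : M].
Proof.
rewrite /submod /set1 /=; split => //; first by move=> _ _ -> ->; rewrite addr0.
by move=> r _ ->; rewrite scaler0.
Qed.

Lemma ex_maximal_complement (R : nzRingType) (M : lmodType R) (N : set M) :
  exists K, [/\ submod K, (forall x, N x -> K x -> x = 0) &
    forall K', submod K' -> (forall x, N x -> K' x -> x = 0) -> K `<=` K' -> K' `<=` K].
Proof.
pose P := [set K | submod K /\ forall x, N x -> K x -> x = 0].
have P0 : P [set 0] by split; [exact: submod0 | move=> x _].
have [|K [[subK NK0] _ Kmax]] := Zorn_bigcup_above P0.
- move=> F Fsub F0 Ftot; split; first by apply: submod_bigcup => // K /Fsub[].
  by move=> x Nx [K FK Kx]; have [_ NK0] := Fsub K FK; exact: NK0.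
- by exists K; split => // K' subK' NK'0; apply: Kmax.
Qed.

Section MaximalComplement.
Variables (R : nzRingType) (M : lmodType R) (N K : set M).
Hypotheses (subN : submod N) (subK : submod K).
Hypothesis NK0 : forall x, N x -> K x -> x = 0.
Hypothesis Kmax :
  forall K', submod K' -> (forall x, N x -> K' x -> x = 0) -> K `<=` K' -> K' `<=` K.
Hypothesis JM0 : forall (a : R) (m : M), jacobson a -> a *: m = 0.

Definition conductor (m : M) : set R :=
  [set r | exists n k, [/\ N n, K k & r *: m = n + k]].

Lemma left_ideal_conductor (m : M) : left_ideal (conductor m).
Proof.
have [N0 DN ZN] := subN; have [K0 DK ZK] := subK; split.
- by exists 0, 0; rewrite scale0r addr0.
- move=> x y [n [k [Nn Kk xmE]]] [n' [k' [Nn' Kk' ymE]]].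
  by exists (n + n'), (k + k'); rewrite scalerDl xmE ymE addrACA; split; auto.
- move=> r x [n [k [Nn Kk xmE]]].
  by exists (r *: n), (r *: k); rewrite -scalerA xmE scalerDr; split; auto.
Qed.

Lemma jacobson_sub_conductor (m : M) : @jacobson R `<=` conductor m.
Proof.
have [N0 _ _] := subN; have [K0 _ _] := subK.
by move=> a Ja; exists 0, 0; rewrite JM0 // addr0.
Qed.

Lemma complement_scale_conductor (m : M) (C : set R) (c : R) :
  left_ideal C -> (forall x, conductor m x -> C x -> jacobson x) -> C c ->
  K (c *: m).
Proof.
move=> [_ _ ZC] condCJ Cc; have [_ _ ZK] := subK.
have NadjK0 : forall x, N x -> adjoin K (c *: m) x -> x = 0.
  move=> x Nx [k [r [Kk xE]]].
  have condrc : conductor m (r * c).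
    exists x, (- k); split => //; first by rewrite -scaleN1r; apply: ZK.
    by rewrite xE -scalerA addrC addKr.
  have Jrc : jacobson (r * c) by apply: condCJ => //; apply: ZC.
  by apply: NK0 => //; rewrite xE scalerA JM0 // addr0.
apply: (Kmax (submod_adjoin _ subK) NadjK0).
- by move=> k Kk; exists k, 0; rewrite scale0r addr0.
- by exists 0, 1; rewrite scale1r add0r; split => //; case: subK.
Qed.

Lemma maximal_complement_cover :
  semilocal R -> forall m, exists n k, [/\ N n, K k & m = n + k].
Proof.
move=> semilocalR m.
have [C [idC _ condCJ condC_cover]] :=
  semilocalR _ (left_ideal_conductor m) (jacobson_sub_conductor m).
have [l [c [condl Cc oneE]]] := condC_cover 1.
have [n [k [Nn Kk lmE]]] := condl.
have [_ DK _] := subK.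
exists n, (k + c *: m); split => //.
  by apply: DK => //; exact: complement_scale_conductor idC condCJ Cc.
by rewrite addrA -lmE -scalerDl -oneE scale1r.
Qed.

End MaximalComplement.

Lemma jacobson_scale0_semisimple (R : nzRingType) (M : lmodType R) :
  (forall (a : R) (m : M), jacobson a -> a *: m = 0) ->
  semilocal R -> semisimple_mod M.
Proof.
move=> JM0 semilocalR N subN.
have [K [subK NK0 Kmax]] := ex_maximal_complement N.
by exists K; split => //; apply: maximal_complement_cover.
Qed.

Theorem proposition2p1 (R : nzRingType) (M : lmodType R) :
  RD_regular M ->
  (forall (a : R) (m : M), jacobson a -> a *: m = 0) /\
  (semilocal R -> semisimple_mod M).
Proof.
move=> RDM; have JM0 := RD_regular_jacobson_scale0 RDM.
by split => //; apply: jacobson_scale0_semisimple.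
Qed.
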